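(* Let $D$ be a centrally finite division algebra, let $R=D[t_1,\ldots,t_n]$ be the ring of polynomials in $n$ central commuting variables over $D$, let $A$ be a finite subset of $R$, and let $S=D[A]$ be the subring of $R$ generated by $D\cup A$. Then $S$ is centrally finitely generated over $D$.
   Context: All rings are associative with unity. A division algebra is centrally finite if it is finite-dimensional over its center. A ring $S\supseteq D$ is centrally finitely generated over $D$ if $S$ is isomorphic, compatibly with the inclusion of $D$, to a quotient $D[x_1,\ldots,x_m]/I$ of a polynomial ring in central commuting variables by a two-sided ideal $I$ with $D\cap I=\{0\}$; equivalently, $S$ is generated as a ring by $D$ together with finitely many pairwise commuting elements each commuting with every element of $D$. *)

From HB Require Import structures.
From mathcomp Require Import all_boot all_order all_algebra.
From mathcomp Require Import mpoly.
Set Implicit Arguments. Unset Strict Implicit. Unset Printing Implicit Defensive.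
Import GRing.Theory.
Local Open Scope ring_scope.

(* A division ring: every nonzero element is a unit (nontriviality 1 != 0
   is part of MathComp's ringType). *)
Definition is_division_ring (D : unitRingType) : Prop :=
  forall x : D, x != 0 -> x \is a GRing.unit.

Definition central (D : ringType) (z : D) : Prop := forall x : D, z * x = x * z.

(* Centrally finite: finite-dimensional over its center, i.e. finitely
   generated (equivalently finite-dimensional, the center being a field)
   as a module over the center: there are finitely many elements e_i such
   that every x is a center-linear combination of them. *)
Definition centrally_finite (D : ringType) : Prop :=
  exists e : seq D, forall x : D,
    exists z : seq D, size z = size e /\ (forall c, c \in z -> central c) /\
      x = \sum_(i < size e) z`_i * e`_i.

Definition gen_subring (R : ringType) (X : R -> Prop) : R -> Prop :=
  fun r => forall P : R -> Prop,
    P 1 -> (forall x y, P x -> P y -> P (x - y)) ->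
    (forall x y, P x -> P y -> P (x * y)) ->
    (forall x, X x -> P x) -> P r.

(* S = D[A] inside R = D[t_1..t_n]: the subring generated by the constants
   (the copy of D) together with the finite set A. *)
Definition DA (D : ringType) (n : nat) (A : seq {mpoly D[n]}) : {mpoly D[n]} -> Prop :=
  gen_subring (fun p => (exists c : D, p = c%:MP) \/ p \in A).

(* A subring S of R containing D (the constants) is centrally finitely
   generated over D if S is isomorphic, compatibly with D, to a quotient
   D[x_1..x_m]/I with D \cap I = 0; i.e. there is a ring morphism
   D[x_1..x_m] -> R that is the identity on D and whose image is exactly S
   (its kernel I then meets D trivially). *)
Definition centrally_fin_gen (D : ringType) (n : nat) (S : {mpoly D[n]} -> Prop) : Prop :=
  exists (m : nat) (f : {rmorphism {mpoly D[m]} -> {mpoly D[n]}}),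
    (forall c : D, f c%:MP = c%:MP) /\
    (forall r, S r <-> exists p, f p = r).

From HB Require Import structures.
From mathcomp Require Import all_boot all_order all_algebra.
From mathcomp Require Import mpoly.
From Stdlib Require Import Classical.

Set Implicit Arguments. Unset Strict Implicit. Unset Printing Implicit Defensive.
Import GRing.Theory.
Local Open Scope ring_scope.

(* Let S be a subset of D[t_1..t_n] closed under subtraction and under left
   and right multiplication by constants.  Every element of S is a left
   D-combination of elements of S that commute with the constants, hence are
   central in D[t_1..t_n]: given a in S, scale a coefficient of a to 1; if
   the result a' commutes with every constant we are done, otherwise
   d a' - a' d lies in S and has strictly smaller support, so induction
   yields such an element b with a coefficient 1 at a monomial of a, and
   a - a_mu b lies in S with smaller support.  Applying this to the finitely
   many elements of A gives finitely many central elements of D[A] which,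
   together with D, generate D[A]; evaluating the variables at them is the
   required presentation. *)

Section GenSubring.
Variables (R : nzRingType) (X : R -> Prop).

Lemma gen_subring1 : gen_subring X 1.
Proof. by move=> P. Qed.

Lemma gen_subringB x y :
  gen_subring X x -> gen_subring X y -> gen_subring X (x - y).
Proof. by move=> Sx Sy P P1 PB PM PX; apply: (PB); [apply: Sx | apply: Sy]. Qed.

Lemma gen_subringM x y :
  gen_subring X x -> gen_subring X y -> gen_subring X (x * y).
Proof. by move=> Sx Sy P P1 PB PM PX; apply: (PM); [apply: Sx | apply: Sy]. Qed.

Lemma gen_subring_gen x : X x -> gen_subring X x.
Proof. by move=> Xx P P1 PB PM PX; apply: PX. Qed.

Lemma gen_subring0 : gen_subring X 0.
Proof. by rewrite -(subrr 1); apply: gen_subringB; apply: gen_subring1. Qed.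

Lemma gen_subringD x y :
  gen_subring X x -> gen_subring X y -> gen_subring X (x + y).
Proof.
move=> Sx Sy; have -> : x + y = x - (0 - y) by rewrite sub0r opprK.
by apply: gen_subringB => //; apply: gen_subringB => //; apply: gen_subring0.
Qed.

Lemma gen_subringX x k : gen_subring X x -> gen_subring X (x ^+ k).
Proof.
move=> Sx; elim: k => [|k IHk]; first by rewrite expr0; apply: gen_subring1.
by rewrite exprS; apply: gen_subringM.
Qed.

Lemma gen_subring_sum (I : Type) (r : seq I) (F : I -> R) :
  (forall i, gen_subring X (F i)) -> gen_subring X (\sum_(i <- r) F i).
Proof.
move=> SF; apply: (big_ind (gen_subring X)) => [||i _]; last exact: SF.
  exact: gen_subring0.
exact: gen_subringD.
Qed.

Lemma gen_subring_prod (I : Type) (r : seq I) (F : I -> R) :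
  (forall i, gen_subring X (F i)) -> gen_subring X (\prod_(i <- r) F i).
Proof.
move=> SF; apply: (big_ind (gen_subring X)) => [||i _]; last exact: SF.
  exact: gen_subring1.
exact: gen_subringM.
Qed.

End GenSubring.

Lemma gen_subring_sub (R : nzRingType) (X Y : R -> Prop) :
  (forall x, X x -> gen_subring Y x) ->
  forall r, gen_subring X r -> gen_subring Y r.
Proof.
move=> XY r Sr; apply: Sr => //; [exact: gen_subringB | exact: gen_subringM].
Qed.

Section MPolyConst.
Variables (D : nzRingType) (n : nat).
Notation R := {mpoly D[n]}.

Lemma DA_const (A : seq R) c : DA A c%:MP.
Proof. by apply: gen_subring_gen; left; exists c. Qed.

Lemma DA_mem (A : seq R) a : a \in A -> DA A a.
Proof. by move=> aA; apply: gen_subring_gen; right. Qed.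

Lemma DA_sub (A B : seq R) :
  (forall a, a \in A -> DA B a) -> forall r, DA A r -> DA B r.
Proof.
by move=> AB; apply: gen_subring_sub => x [[c ->] | /AB //]; apply: DA_const.
Qed.

Lemma DA_subset (A B : seq R) : {subset A <= B} -> forall r, DA A r -> DA B r.
Proof. by move=> AB; apply: DA_sub => a /AB; apply: DA_mem. Qed.

Lemma mcoeffMC (p : R) c m : (p * c%:MP)@_m = p@_m * c.
Proof.
have mcoeff_sum := big_morph (mcoeff m) (mcoeffD m) (mcoeff0 _ _).
rewrite [in LHS](mpolyE p) big_distrl /= mcoeff_sum.
rewrite [in RHS](mpolyE p) mcoeff_sum mulr_suml.
apply: eq_bigr => k _.
by rewrite -scalerAl -commr_mpolyX mul_mpolyC !mcoeffZ mcoeffX -mulrA commr_nat.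
Qed.

Definition commC (p : R) := forall d : D, GRing.comm d%:MP p.

Lemma commC_commr p x : commC p -> GRing.comm x p.
Proof.
move=> cp; apply/esym; rewrite /GRing.comm (mpolyE x).
apply: commr_sum => k _; rewrite -mul_mpolyC.
exact: commrM (commr_sym (cp _)) (commr_mpolyX _ _).
Qed.

Lemma size_msupp_lt (a b : R) mu :
  (forall m, a@_m = 0 -> b@_m = 0) -> a@_mu != 0 -> b@_mu = 0 ->
  (size (msupp b) < size (msupp a))%N.
Proof.
move=> ab a_mu b_mu; apply: (@uniq_leq_size _ (mu :: msupp b)) => [|m].
  by rewrite /= msupp_uniq mcoeff_msupp b_mu eqxx.
rewrite inE => /predU1P [->|]; rewrite !mcoeff_msupp //.
by apply: contra => /eqP/ab ->.
Qed.

End MPolyConst.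

Section Bimodule.
Variables (D : unitRingType) (n : nat).
Notation R := {mpoly D[n]}.
Hypothesis D_div : is_division_ring D.
Variable S : R -> Prop.
Hypothesis S_sub : forall x y, S x -> S y -> S (x - y).
Hypothesis S_mulCl : forall d x, S x -> S (d%:MP * x).
Hypothesis S_mulCr : forall d x, S x -> S (x * d%:MP).

Lemma exists_commC_coef1 a : S a -> a != 0 ->
  exists b, [/\ S b, commC b, forall m, a@_m = 0 -> b@_m = 0 &
                exists2 mu, a@_mu != 0 & b@_mu = 1].
Proof.
have [k] := ubnP (size (msupp a)); elim: k a => // k IHk a lt_ak Sa nz_a.
move: (nz_a); rewrite -msupp_eq0; case a_supp: (msupp a) => [//|mu s] _.
have a_mu : a@_mu != 0 by rewrite -mcoeff_msupp a_supp mem_head.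
set a1 := (a@_mu)^-1%:MP * a.
have a1_mu : a1@_mu = 1 by rewrite mcoeffCM mulVr ?D_div.
have a1_coef m : a@_m = 0 -> a1@_m = 0.
  by move=> a_m; rewrite mcoeffCM a_m mulr0.
have [a1_commC | /not_all_ex_not [d nc_d]] := classic (commC a1).
  by exists a1; split => //; [apply: S_mulCl | exists mu].
set a2 := d%:MP * a1 - a1 * d%:MP.
have a2_coef m : a@_m = 0 -> a2@_m = 0.
  move=> /a1_coef a1_m.
  by rewrite mcoeffB mcoeffCM mcoeffMC a1_m mulr0 mul0r subrr.
have a2_mu : a2@_mu = 0.
  by rewrite mcoeffB mcoeffCM mcoeffMC a1_mu mulr1 mul1r subrr.
have Sa2 : S a2.
  by apply: S_sub; [apply: S_mulCl | apply: S_mulCr]; apply: S_mulCl.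
have nz_a2 : a2 != 0 by rewrite subr_eq0; apply/eqP.
have lt_a2k := leq_trans (size_msupp_lt a2_coef a_mu a2_mu) lt_ak.
have [b [Sb b_commC b_coef [nu a2_nu b_nu]]] := IHk a2 lt_a2k Sa2 nz_a2.
exists b; split => // [m /a2_coef/b_coef //|].
by exists nu => //; apply: contra a2_nu => /eqP/a2_coef ->.
Qed.

Lemma commC_decomposition a : S a ->
  exists cs : seq R, (forall c, c \in cs -> S c /\ commC c) /\ DA cs a.
Proof.
have [k] := ubnP (size (msupp a)); elim: k a => // k IHk a lt_ak Sa.
have [->|nz_a] := eqVneq a 0.
  by exists [::]; split => //; apply: gen_subring0.
have [b [Sb b_commC b_coef [mu a_mu b_mu]]] := exists_commC_coef1 Sa nz_a.
set a1 := a - (a@_mu)%:MP * b.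
have a1_coef m : a@_m = 0 -> a1@_m = 0.
  by move=> a_m; rewrite mcoeffB mcoeffCM a_m (b_coef _ a_m) mulr0 subrr.
have a1_mu : a1@_mu = 0 by rewrite mcoeffB mcoeffCM b_mu mulr1 subrr.
have lt_a1k := leq_trans (size_msupp_lt a1_coef a_mu a1_mu) lt_ak.
have [cs [cs_S a1_cs]] := IHk a1 lt_a1k (S_sub Sa (S_mulCl _ Sb)).
exists (b :: cs); split; first by move=> c; rewrite inE => /predU1P [->|/cs_S].
rewrite -(subrK ((a@_mu)%:MP * b) a) -/a1.
apply: gen_subringD.
  by apply: DA_subset a1_cs => c c_cs; rewrite inE c_cs orbT.
by apply: gen_subringM; [apply: DA_const | apply: DA_mem; rewrite mem_head].
Qed.

Lemma commC_generators (A : seq R) : (forall a, a \in A -> S a) ->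
  exists cs : seq R, (forall c, c \in cs -> S c /\ commC c) /\
                     (forall a, a \in A -> DA cs a).
Proof.
elim: A => [|a A IHA] SA; first by exists [::].
have [|cs [cs_S A_cs]] := IHA.
  by move=> x xA; apply: SA; rewrite inE xA orbT.
have [cs0 [cs0_S a_cs0]] := commC_decomposition (SA a (mem_head a A)).
exists (cs0 ++ cs); split.
  by move=> c; rewrite mem_cat => /orP [/cs0_S|/cs_S].
move=> x; rewrite inE => /predU1P [->|/A_cs x_cs].
  by apply: DA_subset a_cs0 => c c_cs0; rewrite mem_cat c_cs0.
by apply: DA_subset x_cs => c c_cs; rewrite mem_cat c_cs orbT.
Qed.

End Bimodule.

Section EvalCommC.
Variables (D : nzRingType) (n : nat).
Notation R := {mpoly D[n]}.

Record commC_seq := CommCSeq {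
  cseq :> seq R;
  cseq_commC : forall c, c \in cseq -> commC c
}.

Variable cs : commC_seq.

Definition eval_cseq (p : {mpoly D[size cs]}) : R :=
  mmap (@mpolyC n D) (fun i => cs`_i) p.

Lemma cseq_commr (i : 'I_(size cs)) x : GRing.comm x cs`_i.
Proof. exact/commC_commr/cseq_commC/mem_nth. Qed.

Lemma eval_cseq_is_monoid_morphism : monoid_morphism eval_cseq.
Proof.
have coef_comm (p : {mpoly D[size cs]}) (k k' : 'X_{1..size cs}) :
    GRing.comm (p@_k)%:MP (mmap1 (fun i => cs`_i) k').
  by apply: commr_prod => i _; apply: commrX; apply: cseq_commr.
by have [evalM eval1] := commr_mmap_is_multiplicative cseq_commr coef_comm.
Qed.

HB.instance Definition _ := GRing.isZmodMorphism.Build _ _ eval_cseq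
  (mmap_is_additive _ _).
HB.instance Definition _ := GRing.isMonoidMorphism.Build _ _ eval_cseq
  eval_cseq_is_monoid_morphism.

Lemma eval_cseqC c : eval_cseq c%:MP = c%:MP.
Proof. exact: mmapC. Qed.

Lemma eval_cseqX i : eval_cseq 'X_i = cs`_i.
Proof. by rewrite /eval_cseq mmapX mmap1U. Qed.

Lemma eval_cseq_image r : (exists p, eval_cseq p = r) <-> DA cs r.
Proof.
split=> [[p <-] | DA_r].
  rewrite /eval_cseq /mmap /mmap1; apply: gen_subring_sum => k.
  apply: gen_subringM; first exact: DA_const.
  by apply: gen_subring_prod => i; apply: gen_subringX (DA_mem (mem_nth 0 _)).
apply: (DA_r (fun r => exists p, eval_cseq p = r))
  => [|x y [p <-] [q <-]|x y [p <-] [q <-]|x [[c ->]|]].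
- by exists 1; rewrite rmorph1.
- by exists (p - q); rewrite rmorphB.
- by exists (p * q); rewrite rmorphM.
- by exists c%:MP; rewrite eval_cseqC.
by case/(nthP 0) => i lt_i <-; exists 'X_(Ordinal lt_i); rewrite eval_cseqX.
Qed.

End EvalCommC.

Theorem corollary4p5 (D : unitRingType) (hdiv : is_division_ring D)
  (hcf : centrally_finite D) (n : nat) (A : seq {mpoly D[n]}) :
  centrally_fin_gen (DA A).
Proof.
have DA_mulCl d x : DA A x -> DA A (d%:MP * x).
  by move=> DA_x; exact: gen_subringM (DA_const d) DA_x.
have DA_mulCr d x : DA A x -> DA A (x * d%:MP).
  by move=> DA_x; exact: gen_subringM DA_x (DA_const d).
have [cs [cs_DA A_cs]] := commC_generators hdiv (@gen_subringB _ _)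
  DA_mulCl DA_mulCr (@DA_mem _ _ A).
pose ccs := CommCSeq (fun c c_cs => (cs_DA c c_cs).2).
exists (size cs), (eval_cseq (cs := ccs) : {rmorphism _ -> _}); split.
  exact: eval_cseqC.
move=> r; apply: iff_trans (iff_sym (eval_cseq_image ccs r)).
by split; apply: DA_sub => // c /cs_DA [].
Qed.
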